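(* Let $P\subset\mathbb R^d$ be a $d$-polytope, $S$ a simplex facet of $P$, and $\mathcal F,\mathcal N\subseteq\operatorname{adj}(S)$ disjoint with $V_S(\mathcal F,\mathcal N;P)\neq\emptyset$. Then for any two points $v,w\in V_S(\mathcal F,\mathcal N;P)$ the polytopes $\operatorname{conv}(P\cup\{v\})$ and $\operatorname{conv}(P\cup\{w\})$ are combinatorially equivalent.
   Context: For a facet $F$ of $P$ let $H_F=\{x:\langle x,a_F\rangle=\ell_F\}$ be its affine hull, oriented so that $P\subseteq\{x:\langle x,a_F\rangle\geq\ell_F\}$; put $H_F^+=\{x:\langle x,a_F\rangle>\ell_F\}$, $H_F^-=\{x:\langle x,a_F\rangle<\ell_F\}$. $\operatorname{adj}(S)$ is the set of facets sharing a ridge with $S$. A simplex facet is a facet combinatorially equivalent to a $(d-1)$-simplex. $V_S(\mathcal F,\mathcal N;P)$ is the set of points lying in $H_F^-$ for $F\in\mathcal N\cup\{S\}$, in $H_F$ for $F\in\mathcal F$, and in $H_F^+$ for all other facets $F$ of $P$. *)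

From HB Require Import structures.
From mathcomp Require Import all_boot all_order all_algebra.
From mathcomp Require Import boolp classical_sets reals.
Set Implicit Arguments. Unset Strict Implicit. Unset Printing Implicit Defensive.
Import Order.TTheory GRing.Theory Num.Theory.
Local Open Scope ring_scope.
Local Open Scope classical_set_scope.

Section Polytopes.
Variables (R : realType) (d : nat).
Local Notation vec := 'rV[R]_d.

Definition dotp (x a : vec) : R := \sum_(i < d) x 0 i * a 0 i.

Definition conv (X : set vec) : set vec :=
  [set x | exists (n : nat) (p : 'I_n -> vec) (lam : 'I_n -> R),
     [/\ forall i, X (p i), forall i, 0 <= lam i,
         \sum_i lam i = 1 & x = \sum_i lam i *: p i]].

Definition aff (X : set vec) : set vec :=
  [set x | exists (n : nat) (p : 'I_n -> vec) (lam : 'I_n -> R),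
     [/\ forall i, X (p i), \sum_i lam i = 1 & x = \sum_i lam i *: p i]].

Definition polytope (P : set vec) : Prop :=
  exists V : seq vec, P = conv [set x | x \in V].

Definition aff_indep_in (X : set vec) (n : nat) : Prop :=
  exists p : 'I_n -> vec, (forall i, X (p i)) /\
    forall lam : 'I_n -> R, \sum_i lam i = 0 -> \sum_i lam i *: p i = 0 ->
      forall i, lam i = 0.

(* (affine) dimension of X is k (k = -1 for the empty set) *)
Definition has_dim (X : set vec) (k : int) : Prop :=
  exists n : nat, [/\ k + 1 = n%:Z, aff_indep_in X n & ~ aff_indep_in X n.+1].

Definition valid_ineq (P : set vec) (a : vec) (l : R) : Prop :=
  forall x, P x -> l <= dotp x a.

(* faces of P (including the empty face and P itself) *)
Definition face (P F : set vec) : Prop :=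
  exists (a : vec) (l : R), valid_ineq P a l /\ F = [set x | P x /\ dotp x a = l].

Definition facet (P F : set vec) : Prop :=
  [/\ face P F, F <> P & has_dim F (d%:Z - 1)].

Definition ridge (P F : set vec) : Prop := face P F /\ has_dim F (d%:Z - 2).

(* (a,l) describes the affine hull H_F = {x | <x,a> = l} of F, oriented so
   that P lies in {x | <x,a> >= l} *)
Definition facet_hyp (P F : set vec) (a : vec) (l : R) : Prop :=
  [/\ a != 0, valid_ineq P a l & forall x, aff F x <-> dotp x a = l].

Definition in_Hminus (P F : set vec) (x : vec) : Prop :=
  exists a l, facet_hyp P F a l /\ dotp x a < l.
Definition in_H (P F : set vec) (x : vec) : Prop :=
  exists a l, facet_hyp P F a l /\ dotp x a = l.
Definition in_Hplus (P F : set vec) (x : vec) : Prop :=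
  exists a l, facet_hyp P F a l /\ l < dotp x a.

Definition adj (P S : set vec) : set (set vec) :=
  [set F | [/\ facet P F, F <> S & ridge P (S `&` F)]].

Definition VS (P S : set vec) (Fs Ns : set (set vec)) : set vec :=
  [set x | [/\ in_Hminus P S x,
              forall F, Ns F -> in_Hminus P F x,
              forall F, Fs F -> in_H P F x &
              forall F, facet P F -> F <> S -> ~ Fs F -> ~ Ns F -> in_Hplus P F x]].

Definition comb_equiv (P Q : set vec) : Prop :=
  exists f : set vec -> set vec,
    [/\ forall F, face P F -> face Q (f F),
        forall G, face Q G -> exists F, face P F /\ f F = G &
        forall F1 F2, face P F1 -> face P F2 -> (F1 `<=` F2 <-> f F1 `<=` f F2)].

Definition std_simplex : set vec :=
  conv [set x | exists i : 'I_d, x = delta_mx 0 i].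

Definition simplex_facet (P S : set vec) : Prop :=
  facet P S /\ comb_equiv S std_simplex.

End Polytopes.

(* Faces of [conv (P `|` [set v])] are cut out by valid affine forms, and
   such a face is determined by its trace on [P] together with whether it
   contains the apex [v].  A valid form of [P] that is nonnegative at [v] can be
   modified, without changing the set of vertices of [P] on which it vanishes,
   into one that is nonnegative at [w] and vanishes at [w] exactly when the
   original vanishes at [v]: rotating a valid form about its zero set until it
   defines a facet of [P] keeps its sign at a given point, and the sign of a
   facet form at [w] equals its sign at [v] because [v] and [w] lie in the same
   cell [V_S] of the arrangement of facet hyperplanes.  This matches the faces
   of the two polytopes, preserving traces and apexes, hence inclusions. *)

From HB Require Import structures.
From mathcomp Require Import all_boot all_order all_algebra.
From mathcomp Require Import boolp classical_sets reals.
From mathcomp Require Import ring lra zify.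
Import Order.TTheory GRing.Theory Num.Theory.
Set Implicit Arguments. Unset Strict Implicit. Unset Printing Implicit Defensive.
Local Open Scope ring_scope.
Local Open Scope classical_set_scope.

Lemma exists_neq0_of_sum1 (F : nzRingType) m (lam : 'I_m -> F) :
  \sum_i lam i = 1 -> exists i, lam i != 0.
Proof.
move=> lam1; apply/not_existsP => lam0.
suff : \sum_i lam i = 0 by rewrite lam1 => /eqP; rewrite oner_eq0.
by apply: big1 => i _; apply/eqP/negPn/negP/lam0.
Qed.

Section InnerProduct.
Variables (R : realType) (d : nat).
Implicit Types (c : R) (x y a : 'rV[R]_d).

Lemma dotpDl x y a : dotp (x + y) a = dotp x a + dotp y a.
Proof. by rewrite /dotp -big_split; apply: eq_bigr => i _; rewrite mxE mulrDl. Qed.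

Lemma dotpZl c x a : dotp (c *: x) a = c * dotp x a.
Proof. by rewrite /dotp mulr_sumr; apply: eq_bigr => i _; rewrite mxE mulrA. Qed.

Lemma dotp0l a : dotp 0 a = 0.
Proof. by rewrite /dotp big1 // => i _; rewrite mxE mul0r. Qed.

Lemma dotp0r x : dotp x 0 = 0.
Proof. by rewrite /dotp big1 // => i _; rewrite mxE mulr0. Qed.

Lemma dotp_suml n (lam : 'I_n -> R) (q : 'I_n -> 'rV[R]_d) a :
  dotp (\sum_i lam i *: q i) a = \sum_i lam i * dotp (q i) a.
Proof.
rewrite (big_morph (fun x => dotp x a) (fun x y => dotpDl x y a) (dotp0l a)).
by apply: eq_bigr => i _; rewrite dotpZl.
Qed.

Lemma mulmx_tr_dotp x a : x *m a^T = (dotp x a)%:M.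
Proof.
rewrite [LHS]mx11_scalar; congr (_ %:M).
by rewrite !mxE /dotp; apply: eq_bigr => i _; rewrite mxE.
Qed.

End InnerProduct.

Section ConvexHull.
Variables (R : realType) (d : nat).
Local Notation vec := 'rV[R]_d.
Implicit Types (X Y : set vec) (s : seq vec).

Definition conv_seq s : set vec :=
  [set x | exists lam : 'I_(size s) -> R,
     [/\ forall i, 0 <= lam i, \sum_i lam i = 1 & x = \sum_i lam i *: s`_i]].

Lemma sub_conv X : X `<=` conv X.
Proof.
move=> x Xx; exists 1%N, (fun _ => x), (fun _ => 1).
by split; rewrite // big_ord1 ?scale1r.
Qed.

Lemma conv_mono X Y : X `<=` Y -> conv X `<=` conv Y.
Proof.
by move=> XY x [m [q [lam [Xq ? ? ->]]]]; exists m, q, lam; split => // i; apply: XY.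
Qed.

Lemma valid_ineq_conv X a l :
  (forall x, X x -> l <= dotp x a) -> valid_ineq (conv X) a l.
Proof.
move=> lX x [m [q [lam [Xq lam_ge0 lam1 ->]]]]; rewrite dotp_suml.
rewrite -[l]mul1r -lam1 mulr_suml.
by apply: ler_sum => i _; apply: ler_wpM2l => //; apply: lX.
Qed.

Lemma conv_seq_nth s (i : 'I_(size s)) : conv_seq s s`_i.
Proof.
exists (fun j => (j == i)%:R); split => [j||]; first exact: ler0n.
- by rewrite (bigD1 i) //= big1 ?addr0 ?eqxx // => j /negPf ->.
- by rewrite (bigD1 i) //= big1 ?addr0 ?eqxx ?scale1r // => j /negPf ->; rewrite scale0r.
Qed.

Lemma conv_seq_sub_conv s X : (forall i : 'I_(size s), X s`_i) -> conv_seq s `<=` conv X.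
Proof. by move=> Xs x [lam [? ? ->]]; exists (size s), (fun i => s`_i), lam. Qed.

Lemma conv_sub_conv_seq s X : X `<=` conv_seq s -> conv X `<=` conv_seq s.
Proof.
move=> Xs x [m [q [lam [Xq lam_ge0 lam1 ->]]]].
have /choice [mu mu_q] i : exists mu : 'I_(size s) -> R,
    [/\ forall j, 0 <= mu j, \sum_j mu j = 1 & q i = \sum_j mu j *: s`_j].
  by have [mu ?] := Xs _ (Xq i); exists mu.
exists (fun j => \sum_i lam i * mu i j); split => [j||].
- by apply: sumr_ge0 => i _; apply: mulr_ge0 => //; case: (mu_q i).
- rewrite exchange_big /= -lam1; apply: eq_bigr => i _.
  by rewrite -mulr_sumr; case: (mu_q i) => _ -> _; rewrite mulr1.
- have qE i : q i = \sum_j mu i j *: s`_j by case: (mu_q i).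
  under eq_bigr => i _ do rewrite qE scaler_sumr.
  rewrite exchange_big /=; apply: eq_bigr => j _.
  by rewrite scaler_suml; apply: eq_bigr => i _; rewrite scalerA.
Qed.

Lemma conv_seqE s : conv [set x | x \in s] = conv_seq s.
Proof.
apply/seteqP; split; last by apply: conv_seq_sub_conv => i /=; apply: mem_nth.
apply: conv_sub_conv_seq => x /= xs; rewrite -(nth_index 0 xs).
by have := xs; rewrite -index_mem => ltis; apply: (conv_seq_nth (Ordinal ltis)).
Qed.

Lemma conv_seq_cons s v : conv (conv_seq s `|` [set v]) = conv_seq (v :: s).
Proof.
apply/seteqP; split.
- apply: conv_sub_conv_seq => x [[lam [lam_ge0 lam1 ->]]|->]; last first.
    exact: (conv_seq_nth (s := v :: s) ord0).
  exists (fun j : 'I_(size s).+1 => if unlift ord0 j is Some k then lam k else 0).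
  split => [j||]; first by case: unliftP.
  + by rewrite big_ord_recl unlift_none add0r; under eq_bigr => i _ do rewrite liftK.
  + rewrite big_ord_recl unlift_none scale0r add0r.
    by apply: eq_bigr => i _; rewrite liftK.
- apply: conv_seq_sub_conv => -[[|i] lti] /=; first by right.
  by left; apply: (conv_seq_nth (Ordinal (lti : i < size s)%N)).
Qed.

Lemma aff_dotp_eq (G : set vec) a k y :
  (forall g, G g -> dotp g a = k) -> aff G y -> dotp y a = k.
Proof.
move=> Gk [m [q [lam [Gq lam1 ->]]]]; rewrite dotp_suml.
under eq_bigr => i _ do rewrite Gk //.
by rewrite -mulr_suml lam1 mul1r.
Qed.

Lemma conv_comb_dotp_eq m (lam : 'I_m -> R) (q : 'I_m -> vec) c k :
  (forall i, 0 <= lam i) -> \sum_i lam i = 1 -> (forall i, k <= dotp (q i) c) ->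
  dotp (\sum_i lam i *: q i) c = k -> forall i, lam i != 0 -> dotp (q i) c = k.
Proof.
move=> lam_ge0 lam1 qk; rewrite dotp_suml => sum_k.
have /eqP : \sum_i lam i * (dotp (q i) c - k) = 0.
  under eq_bigr => i _ do rewrite mulrBr.
  by rewrite sumrB sum_k -mulr_suml lam1 mul1r subrr.
rewrite psumr_eq0 => [/allP lam_q i lam_i|i _]; last by rewrite mulr_ge0 ?subr_ge0.
have /implyP := lam_q i (mem_index_enum _).
by rewrite mulf_eq0 (negPf lam_i) subr_eq0 => /(_ isT) /eqP.
Qed.

End ConvexHull.

Lemma mxrank_ker_cV (F : fieldType) m (z : 'cV[F]_m) :
  z != 0 -> \rank (kermx z) = (m - 1)%N.
Proof.
move=> z_neq0; rewrite mxrank_ker; congr (_ - _)%N.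
by apply/eqP; rewrite eqn_leq rank_leq_col lt0n mxrank_eq0 z_neq0.
Qed.

(* The affine function [x |-> <x, a> - k] is encoded by the column vector
   [(a^T; -k)], so that its value at [x] is [homog x *m z]: the affine algebra
   of forms becomes matrix algebra in dimension [d + 1]. *)
Section AffineForms.
Variables (R : realType) (d : nat).
Local Notation vec := 'rV[R]_d.
Local Notation form := 'cV[R]_(d + 1).
Implicit Types (x y a : vec) (z : form).

Definition homog x : 'rV[R]_(d + 1) := row_mx x 1%:M.
Definition aform a (k : R) : form := col_mx a^T (- k%:M).
Definition aval z x : R := (homog x *m z) 0 0.
Definition anormal z : vec := (usubmx z)^T.
Definition aoffset z : R := - dsubmx z 0 0.

Lemma aval_aform a k x : aval (aform a k) x = dotp x a - k.
Proof.
rewrite /aval /homog /aform mul_row_col mulmx_tr_dotp mul1mx.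
by rewrite !mxE !eqxx /= mulr1n.
Qed.

Lemma aformK z : aform (anormal z) (aoffset z) = z.
Proof.
rewrite /aform /anormal /aoffset trmxK -[RHS](vsubmxK z); congr col_mx.
by apply/matrixP => i j; rewrite !ord1 !mxE eqxx mulr1n opprK.
Qed.

Lemma avalE z x : aval z x = dotp x (anormal z) - aoffset z.
Proof. by rewrite -{1}(aformK z) aval_aform. Qed.

Lemma aform_neq0 a k : a != 0 -> aform a k != 0.
Proof. by move=> a_neq0; rewrite col_mx_eq0 negb_and trmx_eq0 a_neq0. Qed.

Lemma aval0 x : aval 0 x = 0.
Proof. by rewrite /aval mulmx0 mxE. Qed.

Lemma avalD z1 z2 x : aval (z1 + z2) x = aval z1 x + aval z2 x.
Proof. by rewrite /aval mulmxDr mxE. Qed.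

Lemma avalZ c z x : aval (c *: z) x = c * aval z x.
Proof. by rewrite /aval -scalemxAr mxE. Qed.

Lemma aval_one x : aval (aform 0 (-1)) x = 1.
Proof. by rewrite aval_aform dotp0r sub0r opprK. Qed.

Lemma aval_affine z n (lam : 'I_n -> R) (q : 'I_n -> vec) :
  \sum_i lam i = 1 -> aval z (\sum_i lam i *: q i) = \sum_i lam i * aval z (q i).
Proof.
move=> lam1; rewrite !avalE dotp_suml.
under [RHS]eq_bigr => i _ do rewrite avalE mulrBr.
by rewrite sumrB -mulr_suml lam1 mul1r.
Qed.

Lemma aval_affine2 z (s t : R) x y : s + t = 1 ->
  aval z (s *: x + t *: y) = s * aval z x + t * aval z y.
Proof.
move=> st1; rewrite !avalE dotpDl !dotpZl.
have -> : s = 1 - t by rewrite -st1 addrK.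
ring.
Qed.

Lemma aval_eq0P z x :
  aval z x = 0 <-> dotp x (anormal z) = aoffset z.
Proof. by rewrite avalE; split => [/eqP|->]; rewrite ?subrr // subr_eq0 => /eqP. Qed.

Lemma homog_mul_eq0 z x : (homog x *m z == 0) = (aval z x == 0).
Proof.
apply/eqP/eqP => [xz0|zx0]; first by rewrite /aval xz0 mxE.
by apply/matrixP => i j; rewrite !ord1 [LHS]zx0 mxE.
Qed.

Lemma mul_homog_mx m (u : 'rV[R]_m) (c : 'I_m -> R) (q : 'I_m -> vec) :
  u *m (\matrix_i (c i *: homog (q i))) =
  row_mx (\sum_i (u 0 i * c i) *: q i) ((\sum_i u 0 i * c i)%:M).
Proof.
rewrite mulmx_sum_row.
under eq_bigr => i _ do rewrite rowK scalerA /homog scale_row_mx scalemx1.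
elim/big_rec3: _ => [|i A B C _ ->]; first by rewrite raddf0 row_mx0.
by rewrite add_row_mx raddfD.
Qed.

Lemma hyperplane_aff_dep a k (q : 'I_d.+1 -> vec) :
  a != 0 -> (forall i, dotp (q i) a = k) ->
  exists lam : 'I_d.+1 -> R,
    [/\ \sum_i lam i = 0, \sum_i lam i *: q i = 0 & exists i, lam i != 0].
Proof.
move=> a_neq0 qk; pose N := \matrix_i (1 *: homog (q i)).
have N_ker : (N <= kermx (aform a k))%MS.
  apply/sub_kermxP/row_matrixP => i; rewrite row_mul rowK row0 scale1r; apply/eqP.
  by rewrite homog_mul_eq0 aval_aform qk subrr.
have : kermx N != 0.
  rewrite kermx_eq0 /row_free; apply: contraTneq (mxrankS N_ker) => ->.
  by rewrite mxrank_ker_cV ?aform_neq0 // addnK ltnn.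
case/rowV0Pn => u /submxP [r ->{u}] ru_neq0.
have := mulmx_ker N; move=> /(congr1 (mulmx r)); rewrite mulmxA mulmx0 mul_homog_mx.
move=> /eqP; rewrite row_mx_eq0 => /andP [/eqP sum_q /eqP sum_1].
exists (fun j => (r *m kermx N) 0 j); split.
- move/matrixP: sum_1 => /(_ 0 0); rewrite !mxE eqxx mulr1n.
  by under eq_bigr => j _ do rewrite mulr1.
- by rewrite -[RHS]sum_q; apply: eq_bigr => j _; rewrite mulr1.
- exact/rV0Pn.
Qed.

End AffineForms.

(* Rotate the form [A] about the common zeros of [A] and [B]: the extreme
   rotations [k1 A - B] and [B - k2 A], where [k1] and [k2] are the maximum and
   minimum of [B/A], stay nonnegative and acquire a new zero; since they sum to
   [(k1 - k2) A], one of them is still negative at the point where [A] is [a]. *)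
Lemma pencil_rotation (F : realFieldType) (I : finType) (A B : I -> F) (a b : F) :
  (forall i, 0 <= A i) -> (forall i, A i = 0 -> B i = 0) ->
  (forall s t, (forall i, s * A i + t * B i = 0) -> s = 0 /\ t = 0) -> a < 0 ->
  exists s t, [/\ forall i, 0 <= s * A i + t * B i, s * a + t * b < 0 &
    exists i, 0 < A i /\ s * A i + t * B i = 0].
Proof.
move=> A_ge0 AB AB_indep a_lt0.
have A_gt0 i : A i != 0 -> 0 < A i by rewrite lt_def => ->; apply: A_ge0.
have [i0 Ai0] : exists i, 0 < A i.
  apply/not_existsP => A_le0; suff [/eqP] : (1 : F) = 0 /\ (0 : F) = 0 by rewrite oner_eq0.
  apply: AB_indep => i; have [Ai|/A_gt0 /A_le0 //] := eqVneq (A i) 0.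
  by rewrite Ai AB // !mulr0 addr0.
have [i1 Ai1 max_i1] := @arg_maxP _ _ I i0 (fun i => 0 < A i) (fun i => B i / A i) Ai0.
have [i2 Ai2 min_i2] := @arg_minP _ _ I i0 (fun i => 0 < A i) (fun i => B i / A i) Ai0.
set k1 := B i1 / A i1 in max_i1; set k2 := B i2 / A i2 in min_i2.
have on_zeros i s t : A i = 0 -> s * A i + t * B i = 0.
  by move=> Ai; rewrite Ai AB // !mulr0 addr0.
have rot1_ge0 i : 0 <= k1 * A i + (-1) * B i.
  have [/on_zeros -> //|/A_gt0 Ai] := eqVneq (A i) 0.
  by have /= := max_i1 _ Ai; rewrite ler_pdivrMr // mulN1r subr_ge0.
have rot2_ge0 i : 0 <= (- k2) * A i + 1 * B i.
  have [/on_zeros -> //|/A_gt0 Ai] := eqVneq (A i) 0.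
  by have /= := min_i2 _ Ai; rewrite ler_pdivlMr // mul1r mulNr addrC subr_ge0.
have [rot1_neg|rot1_ge0_at] := ltP (k1 * a + (-1) * b) 0.
  exists k1, (-1); split => //; exists i1; split => //.
  by rewrite /k1 mulN1r divfK ?subrr // gt_eqF.
have [rot2_neg|rot2_ge0_at] := ltP ((- k2) * a + 1 * b) 0.
  exists (- k2), 1; split => //; exists i2; split => //.
  by rewrite /k2 mul1r mulNr divfK ?addNr // gt_eqF.
have [k12|k12] := eqVneq k1 k2.
  suff [_ /eqP] : k1 = 0 /\ (-1 : F) = 0 by rewrite oppr_eq0 oner_eq0.
  apply: AB_indep => i; apply/eqP; rewrite eq_le rot1_ge0 andbT.
  have [/on_zeros -> //|/A_gt0 Ai] := eqVneq (A i) 0.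
  by have /= := min_i2 _ Ai; rewrite -k12 ler_pdivlMr // mulN1r subr_le0.
have k21 : k2 < k1 by rewrite lt_neqAle eq_sym k12 (le_trans (min_i2 _ Ai1)).
have : 0 <= (k1 - k2) * a by nra.
by rewrite pmulr_rge0 ?subr_gt0 // leNgt a_lt0.
Qed.

Section TightVertices.
Variables (R : realType) (d : nat) (V : seq 'rV[R]_d).
Local Notation vec := 'rV[R]_d.
Local Notation form := 'cV[R]_(d + 1).
Local Notation n := (size V).
Local Notation P := (conv_seq V).
Implicit Types (x y : vec) (z : form) (j : 'I_n).

Definition valid_form z := forall j : 'I_n, 0 <= aval z V`_j.
Definition tight z (j : 'I_n) := aval z V`_j == 0.
Definition tight_mx z : 'M[R]_(n, d + 1) := \matrix_j ((tight z j)%:R *: homog V`_j).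

Lemma valid_form_ge0 z x : valid_form z -> P x -> 0 <= aval z x.
Proof.
move=> z_ge0 [lam [lam_ge0 lam1 ->]]; rewrite aval_affine //.
by apply: sumr_ge0 => i _; apply: mulr_ge0.
Qed.

Lemma valid_aform a k : valid_ineq P a k -> valid_form (aform a k).
Proof. by move=> Pak j; rewrite aval_aform subr_ge0; apply/Pak/conv_seq_nth. Qed.

Lemma valid_form_ineq z : valid_form z -> valid_ineq P (anormal z) (aoffset z).
Proof. by move=> z_ge0 y Py; have := valid_form_ge0 z_ge0 Py; rewrite avalE subr_ge0. Qed.

Lemma tight_mx_mul_eq0 z z' :
  tight_mx z *m z' = 0 <-> forall j, tight z j -> aval z' V`_j = 0.
Proof.
split => [zz' j zj|zz'].
  move/(congr1 (row j)): zz'; rewrite row_mul rowK row0 zj scale1r.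
  by move/eqP; rewrite homog_mul_eq0 => /eqP.
apply/row_matrixP => j; rewrite row_mul rowK row0 -scalemxAl.
have [zj|] := boolP (tight z j); last by rewrite scale0r.
by rewrite scale1r; apply/eqP; rewrite homog_mul_eq0 zz'.
Qed.

Lemma tight_mx_mulmx z : tight_mx z *m z = 0.
Proof. by apply/tight_mx_mul_eq0 => j /eqP. Qed.

Lemma valid_form_zeros z z' x : valid_form z ->
  (forall j, tight z j -> aval z' V`_j = 0) -> P x -> aval z x = 0 -> aval z' x = 0.
Proof.
move=> z_ge0 zz' [lam [lam_ge0 lam1 ->]]; rewrite !aval_affine // => /eqP.
rewrite psumr_eq0 => [/allP lam_z|i _]; last exact: mulr_ge0.
apply: big1 => i _; have /implyP := lam_z i (mem_index_enum _).
by rewrite mulf_eq0 => /(_ isT) /orP [/eqP ->|/zz' ->]; rewrite ?mul0r ?mulr0.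
Qed.

Lemma tight_eq_zero_iff z z' x :
  valid_form z -> valid_form z' -> tight z =1 tight z' -> P x ->
  aval z x = 0 <-> aval z' x = 0.
Proof.
move=> z_ge0 z'_ge0 zz' Px; split; apply: valid_form_zeros => // j.
  by rewrite zz' => /eqP.
by rewrite -zz' => /eqP.
Qed.

Lemma homog_sub_tight_mx z x : (homog x <= tight_mx z)%MS ->
  exists lam : 'I_n -> R, [/\ forall j, ~~ tight z j -> lam j = 0,
     \sum_j lam j = 1 & x = \sum_j lam j *: V`_j].
Proof.
move=> /submxP [r]; rewrite /tight_mx mul_homog_mx /homog => /eq_row_mx [xE sum1].
exists (fun j => r 0 j * (tight z j)%:R); split => // [j /negPf ->|].
  by rewrite mulr0.
by move/matrixP: sum1 => /(_ 0 0); rewrite !mxE eqxx mulr1n.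
Qed.

Lemma aval_sub_tight_mx z z' x :
  (homog x <= tight_mx z)%MS -> tight_mx z *m z' = 0 -> aval z' x = 0.
Proof.
by move=> /submxP [r xE] zz'; apply/eqP; rewrite -homog_mul_eq0 xE -mulmxA zz' mulmx0.
Qed.

Lemma rank_tight_mx z : z != 0 -> (\rank (tight_mx z) <= d)%N.
Proof.
move=> z_neq0; have /mxrankS : (tight_mx z <= kermx z)%MS.
  exact/sub_kermxP/tight_mx_mulmx.
by rewrite mxrank_ker_cV // addnK.
Qed.

Lemma rank_tight_mx_lt z z' j :
  (forall i, tight z i -> tight z' i) -> tight z' j -> ~~ tight z j ->
  (\rank (tight_mx z) < \rank (tight_mx z'))%N.
Proof.
move=> zz' z'j zj.
have sub_z' : (tight_mx z <= tight_mx z')%MS.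
  apply/row_subP => i; rewrite rowK; have [zi|_] := boolP (tight z i).
  - by rewrite scale1r; apply: (eq_row_sub i); rewrite rowK zz' // scale1r.
  - by rewrite scale0r sub0mx.
rewrite ltn_neqAle (mxrankS sub_z') andbT ((mxrank_leqif_sup sub_z').2).
apply: contra zj => sub_z; apply/eqP/(aval_sub_tight_mx _ (tight_mx_mulmx z)).
by apply: submx_trans sub_z; apply: (eq_row_sub j); rewrite rowK z'j scale1r.
Qed.

Lemma exists_indep_tight_form z : z != 0 -> (\rank (tight_mx z) < d)%N ->
  exists z', tight_mx z *m z' = 0 /\
    forall s t, s *: z + t *: z' = 0 -> s = 0 /\ t = 0.
Proof.
move=> z_neq0 rank_lt; pose K := kermx (tight_mx z)^T.
have [i Ki] : exists i, ~~ (row i K <= z^T)%MS.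
  apply/row_subPn/negP => /mxrankS; rewrite mxrank_ker mxrank_tr.
  by have := rank_leq_row z^T; lia.
exists (row i K)^T; split.
  by apply: trmx_inj; rewrite trmx_mul trmxK trmx0 -row_mul mulmx_ker row0.
move=> s t st0; have [t0|t_neq0] := eqVneq t 0.
  move: st0; rewrite t0 scale0r addr0 => /eqP.
  by rewrite scaler_eq0 (negPf z_neq0) orbF => /eqP.
case/negP: Ki; have -> : row i K = (- (s / t)) *: z^T.
  apply: trmx_inj; rewrite linearZ /= trmxK; apply: (scalerI t_neq0).
  rewrite scalerA mulrN mulrCA divff // mulr1 scaleNr.
  by apply/eqP; rewrite -subr_eq0 opprK addrC st0.
by rewrite scalemx_sub.
Qed.

End TightVertices.

Arguments tight {R d} V z j.

Section FacetForms.
Variables (R : realType) (d : nat) (V : seq 'rV[R]_d).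
Local Notation vec := 'rV[R]_d.
Local Notation form := 'cV[R]_(d + 1).
Local Notation n := (size V).
Local Notation P := (conv_seq V).
Implicit Types (x y : vec) (z : form) (j : 'I_n).

Definition hface z : set vec := [set y | P y /\ dotp y (anormal z) = aoffset z].

Definition facet_form z :=
  facet P (hface z) /\ facet_hyp P (hface z) (anormal z) (aoffset z).

Definition full_dim := forall z, (forall j : 'I_n, aval z V`_j = 0) -> z = 0.

Lemma full_dim_has_dim : has_dim P d -> full_dim.
Proof.
move=> [m [m_d [q [Pq q_indep]] _]] z zV.
have zP y : P y -> dotp y (anormal z) = aoffset z.
  move=> [lam [_ lam1 ->]]; apply/aval_eq0P; rewrite aval_affine //.
  by rewrite big1 // => j _; rewrite zV mulr0.
have md : m = d.+1 by move: m_d; lia.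
subst m; have [normal0|normal_neq0] := eqVneq (anormal z) 0.
  have offset0 : aoffset z = 0 by rewrite -(zP _ (Pq ord0)) normal0 dotp0r.
  by rewrite -(aformK z) normal0 offset0 /aform trmx0 raddf0 oppr0 col_mx0.
have [lam [sum0 sum_q [i /eqP]]] := hyperplane_aff_dep normal_neq0 (fun i => zP _ (Pq i)).
by case; apply: q_indep.
Qed.

Lemma hface_tight z j : tight V z j -> hface z V`_j.
Proof. by rewrite /tight avalE subr_eq0 => /eqP; split; first exact: conv_seq_nth. Qed.

Lemma aff_indep_hface z : aff_indep_in (hface z) (\rank (tight_mx V z)).
Proof.
pose f := maxrankfun (tight_mx V z); have f_free := maxrowsub_free (tight_mx V z).
have tight_f i : tight V z (f i).
  apply: contraT => /negPf zfi.
  have : (delta_mx 0 i : 'rV_(\rank (tight_mx V z))) *m rowsub f (tight_mx V z) == 0.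
    by rewrite -rowE row_rowsub rowK zfi scale0r.
  rewrite mulmx_free_eq0 // => /eqP /matrixP /(_ 0 i).
  by rewrite !mxE !eqxx => /eqP; rewrite oner_eq0.
have f_rows : rowsub f (tight_mx V z) = \matrix_i (1 *: homog V`_(f i)).
  by apply/row_matrixP => i; rewrite row_rowsub !rowK tight_f.
exists (fun i => V`_(f i)); split.
  by move=> i; apply: hface_tight.
move=> lam sum0 sum_lam0.
have : \row_i lam i *m rowsub f (tight_mx V z) == 0.
  rewrite f_rows mul_homog_mx.
  under eq_bigr => i _ do rewrite mulr1 mxE.
  under [X in row_mx _ X%:M]eq_bigr => i _ do rewrite mulr1 mxE.
  by rewrite sum0 sum_lam0 raddf0 row_mx0.
by rewrite mulmx_free_eq0 // => /eqP /matrixP lam0 i; have := lam0 0 i; rewrite !mxE.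
Qed.

Lemma aff_hface z y : z != 0 -> \rank (tight_mx V z) = d ->
  aff (hface z) y <-> dotp y (anormal z) = aoffset z.
Proof.
move=> z_neq0 rank_d; split; first by apply: aff_dotp_eq => g [].
move=> yz; have sub_z : (tight_mx V z <= kermx z)%MS by apply/sub_kermxP/tight_mx_mulmx.
have ker_sub : (kermx z <= tight_mx V z)%MS.
  by rewrite -(mxrank_leqif_sup sub_z).2 mxrank_ker_cV // addnK rank_d.
have /homog_sub_tight_mx [lam [lam_tight lam1 ->]] : (homog y <= tight_mx V z)%MS.
  apply: submx_trans ker_sub; apply/sub_kermxP/eqP.
  by rewrite homog_mul_eq0 avalE yz subrr.
have [j1 lam_j1] := exists_neq0_of_sum1 lam1.
have zj1 : tight V z j1 by apply: contraT => /lam_tight /eqP; rewrite (negPf lam_j1).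
exists n, (fun j => if tight V z j then V`_j else V`_j1), lam.
split => // [j|]; first by case: ifP => [|_]; apply: hface_tight.
by apply: eq_bigr => j _; case: ifP => // /negbT /lam_tight ->; rewrite !scale0r.
Qed.

Section FullDim.
Hypothesis V_full : full_dim.

Lemma size_gt0 : (0 < n)%N.
Proof.
rewrite lt0n; apply/negP => /eqP n0.
have one0 : aform 0 (-1) = 0 :> form by apply: V_full => -[j]; rewrite n0.
by have /eqP := aval_one (0 : vec); rewrite one0 aval0 eq_sym oner_eq0.
Qed.

Lemma exists_rank_form z x : valid_form V z -> aval z x < 0 ->
  exists z0, [/\ valid_form V z0, aval z0 x < 0,
    forall j, tight V z j -> tight V z0 j & \rank (tight_mx V z0) = d].
Proof.
have [N] := ubnP (d - \rank (tight_mx V z))%N; elim: N z => // N IH z rankN z_ge0 zx_lt0.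
have z_neq0 : z != 0 by apply: contraTneq zx_lt0 => ->; rewrite aval0 ltxx.
have [rank_lt|rank_ge] := ltnP (\rank (tight_mx V z)) d; last first.
  by exists z; split => //; apply/eqP; rewrite eqn_leq rank_tight_mx.
have [z' [/tight_mx_mul_eq0 z'_tight z'_indep]] := exists_indep_tight_form z_neq0 rank_lt.
have z'_zero j : aval z V`_j = 0 -> aval z' V`_j = 0 by move/eqP; apply: z'_tight.
have zz'_indep s t : (forall j, s * aval z V`_j + t * aval z' V`_j = 0) -> s = 0 /\ t = 0.
  by move=> st0; apply/z'_indep/V_full => j; rewrite avalD !avalZ st0.
have [s [t [st_ge0 st_x [j [zj_gt0 stj]]]]] :=
  pencil_rotation (aval z' x) z_ge0 z'_zero zz'_indep zx_lt0.
pose z1 := s *: z + t *: z'.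
have z1E y : aval z1 y = s * aval z y + t * aval z' y by rewrite avalD !avalZ.
have z_z1 i : tight V z i -> tight V z1 i.
  by move=> zi; rewrite /tight z1E (eqP zi) z'_tight // !mulr0 addr0.
have rank_z1 : (\rank (tight_mx V z) < \rank (tight_mx V z1))%N.
  by apply: (rank_tight_mx_lt z_z1 (j := j)); rewrite /tight ?z1E ?stj // gt_eqF.
have [z0 [z0_ge0 z0x z1_z0 rank_z0]] : exists z0, [/\ valid_form V z0, aval z0 x < 0,
    forall i, tight V z1 i -> tight V z0 i & \rank (tight_mx V z0) = d].
  apply: IH => [|i|]; rewrite ?z1E //; lia.
by exists z0; split => // i /z_z1 /z1_z0.
Qed.

Lemma hface_neq z : z != 0 -> hface z <> P.
Proof.
move=> z_neq0 zP; have [j zj] : exists j : 'I_n, aval z V`_j != 0.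
  apply/not_existsP => zV0; case/eqP: z_neq0; apply: V_full => j.
  by apply/eqP/negPn/negP; apply: zV0.
have [_] : hface z V`_j by rewrite zP; apply: conv_seq_nth.
by move/eqP: zj; rewrite avalE => /[swap] ->; rewrite subrr.
Qed.

Lemma facet_form_of_rank z x : valid_form V z -> aval z x < 0 ->
  \rank (tight_mx V z) = d -> facet_form z.
Proof.
move=> z_ge0 zx_lt0 rank_d.
have z_neq0 : z != 0 by apply: contraTneq zx_lt0 => ->; rewrite aval0 ltxx.
have normal_neq0 : anormal z != 0.
  apply: contraTneq zx_lt0 => normal0; rewrite -leNgt.
  by have := z_ge0 (Ordinal size_gt0); rewrite !avalE normal0 !dotp0r.
have zP := valid_form_ineq z_ge0.
split; last by split => // y; apply: aff_hface.
split; [by exists (anormal z), (aoffset z) | exact: hface_neq |].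
exists d; split; first by rewrite subrK.
  by have := aff_indep_hface z; rewrite rank_d.
move=> [q [zq q_indep]].
have [lam [sum0 sum_lam0 [i lam_i]]] := hyperplane_aff_dep normal_neq0 (fun i => (zq i).2).
by move/eqP: lam_i; apply; apply: q_indep.
Qed.

Lemma exists_facet_beyond z x : valid_form V z -> aval z x < 0 ->
  exists z0, [/\ facet_form z0, valid_form V z0,
    forall j, tight V z j -> tight V z0 j & aval z0 x < 0].
Proof.
move=> z_ge0 zx_lt0; have [z0 [z0_ge0 z0x z_z0 rank_z0]] := exists_rank_form z_ge0 zx_lt0.
by exists z0; split => //; apply: facet_form_of_rank z0_ge0 z0x rank_z0.
Qed.

(* Reflect [x] through the tight vertex [V`_j] and go beyond. *)
Lemma exists_facet_beneath z x j : valid_form V z -> tight V z j -> 0 < aval z x ->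
  exists z0, [/\ facet_form z0, valid_form V z0,
    forall j, tight V z j -> tight V z0 j & 0 < aval z0 x].
Proof.
move=> z_ge0 zj zx_gt0; pose x' := 2 *: V`_j + (-1) *: x.
have x'E z' : tight V z' j -> aval z' x' = - aval z' x.
  by move=> /eqP z'j; rewrite aval_affine2 ?z'j; lra.
have [z0 [z0_facet z0_ge0 z_z0 z0x']] : exists z0, [/\ facet_form z0, valid_form V z0,
    forall j, tight V z j -> tight V z0 j & aval z0 x' < 0].
  by apply: exists_facet_beyond; rewrite // x'E // oppr_lt0.
by exists z0; split => //; move: z0x'; rewrite x'E ?z_z0 // oppr_lt0.
Qed.

End FullDim.
End FacetForms.

Section FormSurgery.
Variables (R : realType) (d : nat) (V : seq 'rV[R]_d).
Local Notation vec := 'rV[R]_d.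
Local Notation form := 'cV[R]_(d + 1).
Local Notation n := (size V).
Implicit Types (x : vec) (z : form) (j : 'I_n).

Lemma exists_form_sep z x : ~~ (homog x <= tight_mx V z)%MS ->
  exists z', tight_mx V z *m z' = 0 /\ aval z' x != 0.
Proof.
rewrite submxE => /rV0Pn [j xj]; exists (col j (cokermx (tight_mx V z))); split.
  by rewrite colE mulmxA mulmx_coker mul0mx.
by rewrite /aval colE mulmxA -colE mxE.
Qed.

Lemma valid_form_perturb z z' : valid_form V z -> tight_mx V z *m z' = 0 ->
  exists2 e, 0 < e & forall s, `|s| <= e ->
    valid_form V (z + s *: z') /\ tight V (z + s *: z') =1 tight V z.
Proof.
move=> z_ge0 /tight_mx_mul_eq0 z'_tight.
pose ratio (j : 'I_n) := aval z V`_j / (`|aval z' V`_j| + 1).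
have [e e_gt0 e_le] : exists2 e : R, 0 < e &
    forall j, 0 < aval z V`_j -> e <= ratio j.
  have [[j0 zj0]|all_tight] := pselect (exists j : 'I_n, 0 < aval z V`_j); last first.
    by exists 1 => // j zj; case: all_tight; exists j.
  have [j1 zj1 min_j1] := @arg_minP _ _ _ j0 (fun j => 0 < aval z V`_j) ratio zj0.
  by exists (ratio j1) => //; rewrite divr_gt0 // ltr_wpDl.
exists e => // s se; have zsE y : aval (z + s *: z') y = aval z y + s * aval z' y.
  by rewrite avalD avalZ.
have pos_zs j : 0 < aval z V`_j -> 0 < aval (z + s *: z') V`_j.
  move=> zj; have := e_le j zj; rewrite ler_pdivlMr ?ltr_wpDl // zsE.
  have : `|s * aval z' V`_j| <= e * `|aval z' V`_j| by rewrite normrM ler_wpM2r.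
  have := ler_norm (- (s * aval z' V`_j)); rewrite normrN; nra.
have tight_zs j : tight V z j -> aval (z + s *: z') V`_j = 0.
  by move=> zj; rewrite zsE (eqP zj) z'_tight // mulr0 addr0.
split => j; have [zj0|zj_neq0] := eqVneq (aval z V`_j) 0.
- by rewrite tight_zs //; apply/eqP.
- by apply/ltW/pos_zs; rewrite lt_def zj_neq0 z_ge0.
- by rewrite /tight tight_zs /tight zj0 ?eqxx.
- by rewrite /tight gt_eqF ?(negPf zj_neq0) // pos_zs // lt_def zj_neq0 z_ge0.
Qed.

Lemma exists_form_sg z z0 x : valid_form V z -> valid_form V z0 ->
  (forall j, tight V z j -> tight V z0 j) -> aval z0 x != 0 ->
  exists z', [/\ valid_form V z', tight V z' =1 tight V z &
    Num.sg (aval z' x) = Num.sg (aval z0 x)].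
Proof.
move=> z_ge0 z0_ge0 z_z0 z0x.
pose lam := (`|aval z x| + 1) / `|aval z0 x|.
have lam_gt0 : 0 < lam by rewrite divr_gt0 ?normr_gt0 // ltr_wpDl.
have z'E y : aval (z + lam *: z0) y = aval z y + lam * aval z0 y by rewrite avalD avalZ.
exists (z + lam *: z0); split.
- by move=> j; rewrite z'E addr_ge0 // mulr_ge0 // ltW.
- move=> j; rewrite /tight z'E; apply/eqP/eqP => [z'j|/[dup] zj ->].
    have := z_ge0 j; have := z0_ge0 j.
    have : 0 <= lam * aval z0 V`_j by rewrite mulr_ge0 // ltW.
    lra.
  by rewrite (eqP (z_z0 j _)) ?mulr0 ?addr0 //; apply/eqP.
- have := ler_norm (aval z x); have := ler_norm (- aval z x); rewrite normrN z'E.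
  case: (ltrgt0P (aval z0 x)) z0x => // z0x _.
  + have -> : lam * aval z0 x = `|aval z x| + 1.
      by rewrite /lam (gtr0_norm z0x) divfK // gt_eqF.
    by move=> *; rewrite !gtr0_sg //; lra.
  + have -> : lam * aval z0 x = - (`|aval z x| + 1).
      by rewrite /lam (ltr0_norm z0x) invrN mulrN mulNr divfK // lt_eqF.
    by move=> *; rewrite !ltr0_sg //; lra.
Qed.

Lemma exists_form_zero z1 z2 x : valid_form V z1 -> valid_form V z2 ->
  tight V z1 =1 tight V z2 -> aval z1 x * aval z2 x < 0 ->
  exists z', [/\ valid_form V z', tight V z' =1 tight V z1 & aval z' x = 0].
Proof.
move=> z1_ge0 z2_ge0 z12 z12x.
pose a := `|aval z2 x|; pose b := `|aval z1 x|.
have [a_gt0 b_gt0] : 0 < a /\ 0 < b.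
  by rewrite !normr_gt0; split; apply: contraTneq z12x => ->; rewrite ?mulr0 ?mul0r ltxx.
have z'E y : aval (a *: z1 + b *: z2) y = a * aval z1 y + b * aval z2 y.
  by rewrite avalD !avalZ.
exists (a *: z1 + b *: z2); split.
- by move=> j; rewrite z'E addr_ge0 // mulr_ge0 // ltW.
- move=> j; apply/idP/idP => [|z1j]; rewrite /tight z'E.
    have : 0 <= a * aval z1 V`_j by rewrite mulr_ge0 // ltW.
    have : 0 <= b * aval z2 V`_j by rewrite mulr_ge0 // ltW.
    move=> h2 h1 /eqP z'j; have /eqP : a * aval z1 V`_j = 0 by lra.
    by rewrite mulf_eq0 gt_eqF.
  have /eqP z2j : tight V z2 j by rewrite -z12.
  by rewrite (eqP z1j) z2j !mulr0 addr0.
- rewrite z'E /a /b.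
  case: (ltrgt0P (aval z1 x)) z12x => [z1x|z1x|->]; last by rewrite mul0r ltxx.
  + by rewrite pmulr_rlt0 // => z2x; rewrite ltr0_norm //; ring.
  + by rewrite nmulr_rlt0 // => z2x; rewrite gtr0_norm //; ring.
Qed.

End FormSurgery.

Section Transfer.
Variables (R : realType) (d : nat) (V : seq 'rV[R]_d).
Local Notation vec := 'rV[R]_d.
Local Notation form := 'cV[R]_(d + 1).
Local Notation n := (size V).
Implicit Types (z : form) (j : 'I_n).
Hypothesis V_full : full_dim V.

Section SignTransfer.
Variables v w : vec.
Hypothesis vw_sides : forall z, facet_form V z -> Num.sg (aval z v) = Num.sg (aval z w).

Lemma exists_form_sg_transfer z j : valid_form V z -> tight V z j -> aval z v != 0 ->
  exists z', [/\ valid_form V z', tight V z' =1 tight V z &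
    Num.sg (aval z' w) = Num.sg (aval z v)].
Proof.
move=> z_ge0 zj zv.
have [z1 [z1_facet z1_ge0 z_z1 z1v]] : exists z1, [/\ facet_form V z1, valid_form V z1,
    forall i, tight V z i -> tight V z1 i & Num.sg (aval z1 v) = Num.sg (aval z v)].
  case: (ltrgt0P (aval z v)) zv => // [zv_gt0|zv_lt0] _.
  - have [z1 [? ? ? z1v]] := exists_facet_beneath V_full z_ge0 zj zv_gt0.
    by exists z1; split => //; rewrite !gtr0_sg.
  - have [z1 [? ? ? z1v]] := exists_facet_beyond V_full z_ge0 zv_lt0.
    by exists z1; split => //; rewrite !ltr0_sg.
have z1w : aval z1 w != 0 by rewrite -sgr_eq0 -vw_sides // z1v sgr_eq0.
have [z' [z'_ge0 z'_tight z'w]] := exists_form_sg z_ge0 z1_ge0 z_z1 z1w.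
by exists z'; split => //; rewrite z'w -vw_sides.
Qed.

End SignTransfer.

Variables v w : vec.
Hypothesis vw_sides : forall z, facet_form V z -> Num.sg (aval z v) = Num.sg (aval z w).
Hypothesis w_beyond : exists2 z, valid_form V z & aval z w < 0.

(* If [w] were off the affine span of the tight vertices of [z], a perturbation
   of [z] with the same tight vertices would not vanish at [w]; transferring
   its sign back to [v] contradicts [v] lying in that span. *)
Lemma tight_span_transfer z j : valid_form V z -> tight V z j ->
  (homog v <= tight_mx V z)%MS -> (homog w <= tight_mx V z)%MS.
Proof.
move=> z_ge0 zj v_span; apply: contraT => w_nspan.
have [z'' [z''_tight z''w]] := exists_form_sep w_nspan.
have [e e_gt0 perturb] := valid_form_perturb z_ge0 z''_tight.
have [z3 [z3_ge0 z3_tight z3w]] : exists z3,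
    [/\ valid_form V z3, tight V z3 =1 tight V z & aval z3 w != 0].
  have [zw0|] := eqVneq (aval z w) 0; last by exists z.
  have e_le : `|e| <= e by rewrite gtr0_norm.
  have [ze_ge0 ze_tight] := perturb e e_le.
  exists (z + e *: z''); split => //.
  by rewrite avalD avalZ zw0 add0r mulf_neq0 // gt_eqF.
have wv_sides z0 : facet_form V z0 -> Num.sg (aval z0 w) = Num.sg (aval z0 v).
  by move/vw_sides.
have z3j : tight V z3 j by rewrite z3_tight.
have [z' [_ z'_tight z'v]] := exists_form_sg_transfer wv_sides z3_ge0 z3j z3w.
have /eqP : aval z' v = 0.
  apply: aval_sub_tight_mx v_span _; apply/tight_mx_mul_eq0 => i zi.
  by apply/eqP; move: zi; rewrite -z3_tight -z'_tight.
by rewrite -sgr_eq0 z'v sgr_eq0 (negPf z3w).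
Qed.

Lemma exists_form_zero_transfer z j : valid_form V z -> tight V z j -> aval z v = 0 ->
  exists z', [/\ valid_form V z', tight V z' =1 tight V z & aval z' w = 0].
Proof.
move=> z_ge0 zj zv0.
have [w_span|w_nspan] := boolP (homog w <= tight_mx V z)%MS.
  by exists z; split; last exact: aval_sub_tight_mx w_span (tight_mx_mulmx V z).
have v_nspan : ~~ (homog v <= tight_mx V z)%MS.
  by apply: contra w_nspan; apply: tight_span_transfer zj.
have [z'' [z''_tight z''v]] := exists_form_sep v_nspan.
have [e e_gt0 perturb] := valid_form_perturb z_ge0 z''_tight.
have side s : `|s| = e -> exists z1, [/\ valid_form V z1,
    tight V z1 =1 tight V z & Num.sg (aval z1 w) = Num.sg (s * aval z'' v)].
  move=> se; have se_le : `|s| <= e by rewrite se.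
  have [zs_ge0 zs_tight] := perturb s se_le.
  have zsj : tight V (z + s *: z'') j by rewrite zs_tight.
  have zsv : aval (z + s *: z'') v = s * aval z'' v by rewrite avalD avalZ zv0 add0r.
  have zsv_neq0 : aval (z + s *: z'') v != 0 by rewrite zsv mulf_neq0 // -normr_gt0 se.
  have [z1 [z1_ge0 z1_tight z1w]] := exists_form_sg_transfer vw_sides zs_ge0 zsj zsv_neq0.
  by exists z1; split => // [i|]; rewrite ?z1_tight ?zs_tight // z1w zsv.
have [z1 [z1_ge0 z1_tight z1w]] := side e (gtr0_norm e_gt0).
have [z2 [z2_ge0 z2_tight z2w]] := side (- e) (etrans (normrN e) (gtr0_norm e_gt0)).
have z12 : tight V z1 =1 tight V z2 by move=> i; rewrite z1_tight z2_tight.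
have z12w : aval z1 w * aval z2 w < 0.
  rewrite -sgr_lt0 sgrM z1w z2w -sgrM mulNr mulrN sgr_lt0 oppr_lt0 -expr2.
  by rewrite exprn_even_gt0 // mulf_neq0 // gt_eqF.
have [z' [z'_ge0 z'_tight z'w]] := exists_form_zero z1_ge0 z2_ge0 z12 z12w.
by exists z'; split => // i; rewrite z'_tight z1_tight.
Qed.

Lemma exists_untight_form (b : bool) : exists z, [/\ valid_form V z,
  forall j, ~~ tight V z j, 0 <= aval z w & (aval z w == 0) = b].
Proof.
case: b; last first.
  by exists (aform 0 (-1)); split => [j|j||]; rewrite /tight ?aval_one ?oner_eq0.
have [zS zS_ge0 zSw] := w_beyond; pose z := zS + (- aval zS w) *: aform 0 (-1).
have zE y : aval z y = aval zS y - aval zS w by rewrite avalD avalZ aval_one mulr1.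
exists z; split => [j|j||]; rewrite ?zE ?subrr ?eqxx //.
- by have := zS_ge0 j; lra.
- by rewrite /tight zE gt_eqF //; have := zS_ge0 j; lra.
Qed.

Lemma valid_form_transfer z : valid_form V z -> 0 <= aval z v ->
  exists z', [/\ valid_form V z', tight V z' =1 tight V z,
    0 <= aval z' w & (aval z' w == 0) = (aval z v == 0)].
Proof.
move=> z_ge0 zv_ge0.
have [[j zj]|no_tight] := pselect (exists j, tight V z j); last first.
  have [z' [z'_ge0 z'_untight z'w_ge0 z'w0]] := exists_untight_form (aval z v == 0).
  exists z'; split => // j; rewrite (negPf (z'_untight j)).
  by apply/esym/negP => zj; apply: no_tight; exists j.
have [zv0|zv_neq0] := eqVneq (aval z v) 0.
  have [z' [z'_ge0 z'_tight z'w0]] := exists_form_zero_transfer z_ge0 zj zv0.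
  by exists z'; split; rewrite ?z'w0 ?eqxx.
have [z' [z'_ge0 z'_tight z'w]] := exists_form_sg_transfer vw_sides z_ge0 zj zv_neq0.
have z'w_gt0 : 0 < aval z' w by rewrite -sgr_gt0 z'w sgr_gt0 lt_def zv_neq0.
by exists z'; split; rewrite ?ltW ?gt_eqF.
Qed.

End Transfer.

Section FacetHyperplanes.
Variables (R : realType) (d : nat) (V : seq 'rV[R]_d).
Local Notation vec := 'rV[R]_d.
Local Notation P := (conv_seq V).
Implicit Types (x : vec) (G : set vec).
Hypothesis V_full : full_dim V.

Lemma exists_above a k : a != 0 -> valid_ineq P a k -> exists2 q, P q & k < dotp q a.
Proof.
move=> a_neq0 Pak.
have [[j aj]|all_on] := pselect (exists j : 'I_(size V), dotp V`_j a != k).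
  by exists V`_j; rewrite ?lt_def ?aj ?Pak //; apply: conv_seq_nth.
have /eqP := aform_neq0 k a_neq0; case; apply: V_full => j.
rewrite aval_aform; apply/eqP; rewrite subr_eq0.
by apply/negPn/negP => aj; apply: all_on; exists j.
Qed.

(* Both hyperplane equations of [G] are positive at a point [q] of [P] off [G];
   on the segment from [x] to [q] the second one vanishes somewhere, which
   then lies in the hyperplane of [G] where the first one is positive. *)
Lemma facet_hyp_gt G a k a' k' x : facet_hyp P G a k -> facet_hyp P G a' k' ->
  k < dotp x a -> k' < dotp x a'.
Proof.
move=> [a_neq0 Pak aff_ak] [_ Pak' aff_ak'] xa.
have [q Pq qa] := exists_above a_neq0 Pak.
have qa' : k' < dotp q a'.
  rewrite lt_def Pak' // andbT; apply: contraTneq qa => /(aff_ak' q).2 /(aff_ak q).1 ->.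
  by rewrite ltxx.
rewrite ltNge; apply/negP => xa'.
pose s := dotp q a' - k'; pose t := dotp x a' - k'.
have s_gt0 : 0 < s by rewrite subr_gt0.
have t_le0 : t <= 0 by rewrite subr_le0.
have st_neq0 : s - t != 0 by rewrite gt_eqF //; lra.
pose y := (s / (s - t)) *: x + (- t / (s - t)) *: q.
have yE b : dotp y b = s / (s - t) * dotp x b + (- t / (s - t)) * dotp q b.
  by rewrite dotpDl !dotpZl.
have ya : dotp y a = k.
  apply/(aff_ak y).1/(aff_ak' y).2; rewrite yE.
  rewrite -[dotp x a'](subrK k') -[dotp q a'](subrK k') -/s -/t; field.
  exact: st_neq0.
have : k < dotp y a.
  have s_gt : 0 < s / (s - t) by rewrite divr_gt0 //; lra.
  have t_ge : 0 <= - t / (s - t) by rewrite divr_ge0 ?oppr_ge0 //; lra.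
  rewrite yE -[X in X < _]mul1r.
  have -> : 1 = s / (s - t) + (- t / (s - t)) by rewrite -mulrDl divff.
  by rewrite mulrDl ltr_leD // ?ltr_pM2l ?ler_wpM2l // ltW.
by rewrite ya ltxx.
Qed.

Lemma facet_hyp_sg G a k a' k' x : facet_hyp P G a k -> facet_hyp P G a' k' ->
  Num.sg (dotp x a - k) = Num.sg (dotp x a' - k').
Proof.
move=> h h'; have [[_ _ aff_ak] [_ _ aff_ak']] := (h, h').
case: (ltrgt0P (dotp x a - k)) => [|xa|].
- move=> /[dup] xa; rewrite subr_gt0 => /(facet_hyp_gt h h') xa'.
  by rewrite (gtr0_sg xa) gtr0_sg // subr_gt0.
- case: (ltrgt0P (dotp x a' - k')) => [|xa'|/eqP].
  + rewrite subr_gt0 => /(facet_hyp_gt h' h).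
    by rewrite -subr_gt0 => /(lt_trans xa); rewrite ltxx.
  + by rewrite !ltr0_sg.
  + rewrite subr_eq0 => /eqP /(aff_ak' x).2 /(aff_ak x).1 /eqP.
    by rewrite -subr_eq0 (lt_eqF xa).
- move=> xa0; move/eqP: (xa0); rewrite subr_eq0 => /eqP /(aff_ak x).2 /(aff_ak' x).1 ->.
  by rewrite xa0 subrr.
Qed.

Lemma VS_sg S Fs Ns x G a k : VS P S Fs Ns x -> facet P G -> facet_hyp P G a k ->
  Num.sg (dotp x a - k) =
    if `[< G = S \/ Ns G >] then -1 else if `[< Fs G >] then 0 else 1.
Proof.
move=> [[aS [kS [hS xS]]] xN xF xO] G_facet h.
case: asboolP => [[GS|/xN [a' [k' [h' x']]]]|notSN].
- by rewrite -GS in hS; rewrite (facet_hyp_sg _ h hS) ltr0_sg // subr_lt0.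
- by rewrite (facet_hyp_sg _ h h') ltr0_sg // subr_lt0.
case: asboolP => [/xF [a' [k' [h' x']]]|notF].
  by rewrite (facet_hyp_sg _ h h') x' subrr sgr0.
have notS : G <> S by move=> GS; apply: notSN; left.
have notN : ~ Ns G by move=> NG; apply: notSN; right.
have [a' [k' [h' x']]] := xO G G_facet notS notF notN.
by rewrite (facet_hyp_sg _ h h') gtr0_sg // subr_gt0.
Qed.

Lemma VS_same_sides S Fs Ns x y z : VS P S Fs Ns x -> VS P S Fs Ns y ->
  facet_form V z -> Num.sg (aval z x) = Num.sg (aval z y).
Proof.
move=> Vx Vy [z_facet z_hyp].
by rewrite !avalE (VS_sg Vx z_facet z_hyp) (VS_sg Vy z_facet z_hyp).
Qed.
Lemma VS_beyond S Fs Ns x : VS P S Fs Ns x -> exists2 z, valid_form V z & aval z x < 0.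
Proof.
move=> [[a [k [[_ Pak _] xak]]] _ _ _]; exists (aform a k); first exact: valid_aform.
by rewrite aval_aform subr_lt0.
Qed.

End FacetHyperplanes.

Section ApexFaces.
Variables (R : realType) (d : nat) (V : seq 'rV[R]_d) (v : 'rV[R]_d).
Local Notation vec := 'rV[R]_d.
Local Notation P := (conv_seq V).
Local Notation Q := (conv (conv_seq V `|` [set v])).
Implicit Types (G : set vec).

Lemma valid_ineq_apex c k : valid_ineq Q c k <-> valid_ineq P c k /\ k <= dotp v c.
Proof.
split => [Qck|[Pck vck]]; last by apply: valid_ineq_conv => x [/Pck|->].
by split => [x Px|]; apply/Qck/sub_conv; [left|right].
Qed.

Lemma face_apex_conv G : face Q G -> conv G `<=` G.
Proof.
move=> [c [k [Qck ->]]] x Gx; split.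
  have GQ : [set y | Q y /\ dotp y c = k] `<=` conv_seq (v :: V).
    by move=> y []; rewrite conv_seq_cons.
  by rewrite conv_seq_cons; apply: conv_sub_conv_seq GQ _ Gx.
move: Gx => [m [q [lam [Gq _ lam1 ->]]]]; rewrite dotp_suml.
by under eq_bigr => i _ do rewrite (Gq i).2; rewrite -mulr_suml lam1 mul1r.
Qed.

Lemma face_apex_sub_conv G : face Q G -> G `<=` conv (G `&` (P `|` [set v])).
Proof.
move=> [c [k [Qck ->]]] x [[m [q [lam [Pq lam_ge0 lam1 xE]]]] xk].
have qk i : k <= dotp (q i) c by apply/Qck/sub_conv.
have Gq : forall i, lam i != 0 -> dotp (q i) c = k.
  by apply: conv_comb_dotp_eq lam_ge0 lam1 qk _; rewrite -xE.
have G_q i : lam i != 0 -> ([set y | Q y /\ dotp y c = k] `&` (P `|` [set v])) (q i).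
  by move=> lam_i; split; [split; [apply: sub_conv | apply: Gq] | ].
have [i0 lam_i0] := exists_neq0_of_sum1 lam1.
exists m, (fun i => if lam i != 0 then q i else q i0), lam; split => // [i|].
  by case: ifP => [/G_q //|_]; apply: G_q.
by rewrite xE; apply: eq_bigr => i _; case: ifP => // /negbFE /eqP ->; rewrite !scale0r.
Qed.

Lemma face_apex_subset G1 G2 : face Q G1 -> face Q G2 ->
  G1 `<=` G2 <-> G1 `&` P `<=` G2 `&` P /\ (G1 v -> G2 v).
Proof.
move=> G1_face G2_face; split => [G12|[G12P G12v] x G1x].
  by split => [x [/G12]|/G12].
apply: (face_apex_conv G2_face); move: (face_apex_sub_conv G1_face G1x).
apply: conv_mono => y [G1y [Py|yv]]; first by have [] := G12P y (conj G1y Py).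
by rewrite yv in G1y *; apply: G12v.
Qed.

Lemma face_apex_eq G1 G2 : face Q G1 -> face Q G2 ->
  G1 `&` P = G2 `&` P -> (G1 v <-> G2 v) -> G1 = G2.
Proof.
move=> G1_face G2_face G12P G12v; apply/seteqP; split.
  by apply/(face_apex_subset G1_face G2_face); rewrite G12P; split => // /G12v.
by apply/(face_apex_subset G2_face G1_face); rewrite G12P; split => // /G12v.
Qed.

End ApexFaces.

Section ApexTransfer.
Variables (R : realType) (d : nat) (V : seq 'rV[R]_d).
Local Notation vec := 'rV[R]_d.
Local Notation P := (conv_seq V).
Local Notation apex v := (conv (conv_seq V `|` [set v])).
Implicit Types (v w : vec) (G : set vec).

Definition faces_transfer v w := forall G, face (apex v) G ->
  exists G', [/\ face (apex w) G', G' `&` P = G `&` P & (G' w <-> G v)].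

Lemma faces_transfer_same_sides v w :
  full_dim V ->
  (forall z, facet_form V z -> Num.sg (aval z v) = Num.sg (aval z w)) ->
  (exists2 z, valid_form V z & aval z w < 0) -> faces_transfer v w.
Proof.
move=> V_full vw_sides w_beyond G [c [k [/valid_ineq_apex [Pck vck] ->]]].
have [|z' [z'_ge0 z'_tight z'w_ge0 z'w0]] :=
  valid_form_transfer V_full vw_sides w_beyond (valid_aform Pck).
  by rewrite aval_aform subr_ge0.
have trace x : P x -> dotp x (anormal z') = aoffset z' <-> dotp x c = k.
  move=> Px; rewrite -aval_eq0P (tight_eq_zero_iff z'_ge0 (valid_aform Pck) z'_tight Px).
  by rewrite aval_aform; split => [/eqP|->]; rewrite ?subrr // subr_eq0 => /eqP.
exists [set x | apex w x /\ dotp x (anormal z') = aoffset z'].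
split.
- exists (anormal z'), (aoffset z'); split => //; apply/valid_ineq_apex.
  by split; [apply: valid_form_ineq | rewrite -subr_ge0 -avalE].
- apply/seteqP; split => x [[_ xE] Px]; split => //.
    by split; [apply/sub_conv; left | apply/(trace x Px)].
  by split; [apply/sub_conv; left | apply/(trace x Px)].
have vk_w : dotp v c = k <-> aval z' w = 0.
  split => [vk|/eqP]; last by rewrite z'w0 aval_aform subr_eq0 => /eqP.
  by apply/eqP; rewrite z'w0 aval_aform vk subrr.
split => [[_ /aval_eq0P/vk_w vk]|[_ /vk_w/aval_eq0P w_z']]; split => //;
  by apply/sub_conv; right.
Qed.

Lemma comb_equiv_apex v w :
  faces_transfer v w -> faces_transfer w v ->
  comb_equiv (apex v) (apex w).
Proof.
move=> vw wv.
have /choice [f fP] G : exists G', face (apex v) G ->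
    [/\ face (apex w) G', G' `&` P = G `&` P & (G' w <-> G v)].
  by have [/vw [G' ?]|] := pselect (face (apex v) G); [exists G'|exists G].
exists f; split => [G /fP []//|G' /[dup] G'_face /wv [G [G_face GP Gw]]|G1 G2 G1_f G2_f].
- exists G; split => //; have [fG_face fGP fGw] := fP G G_face.
  by apply: face_apex_eq fG_face G'_face _ (iff_trans fGw Gw); rewrite fGP GP.
- have [fG1_f fG1P fG1w] := fP G1 G1_f; have [fG2_f fG2P fG2w] := fP G2 G2_f.
  rewrite (face_apex_subset G1_f G2_f) (face_apex_subset fG1_f fG2_f).
  by rewrite fG1P fG2P fG1w fG2w.
Qed.

End ApexTransfer.

Unset Implicit Arguments.

Theorem proposition2p3 (R : realType) (d : nat) (P S : set 'rV[R]_d)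
    (Fs Ns : set (set 'rV[R]_d)) :
  polytope P -> has_dim P d%:Z -> simplex_facet P S ->
  Fs `<=` adj P S -> Ns `<=` adj P S -> Fs `&` Ns = set0 ->
  VS P S Fs Ns !=set0 ->
  forall v w : 'rV[R]_d, VS P S Fs Ns v -> VS P S Fs Ns w ->
    comb_equiv (conv (P `|` [set v])) (conv (P `|` [set w])).
Proof.
move=> [V ->] P_dim _ _ _ _ _ v w; rewrite conv_seqE in P_dim * => Vv Vw.
have V_full := full_dim_has_dim P_dim.
have transfer x y : VS (conv_seq V) S Fs Ns x -> VS (conv_seq V) S Fs Ns y ->
    faces_transfer V x y.
  move=> Vx Vy.
  exact: faces_transfer_same_sides V_full (fun z => VS_same_sides (z := z) V_full Vx Vy)
    (VS_beyond Vy).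
exact: comb_equiv_apex (transfer v w Vv Vw) (transfer w v Vw Vv).
Qed.
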